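(* Let $\alpha>0$, let $X_{0-}$ be a real-valued random variable and let $Z$ be a continuous stochastic process with $Z_0=0$, independent of $X_{0-}$. Fix $\Delta>0$. For $\ell\in M$ set $X^\Delta_t[\ell]=X_{0-}+Z_{\Delta\lfloor t/\Delta\rfloor}-\alpha\ell_{\Delta\lfloor t/\Delta\rfloor}$, $\tau^\Delta[\ell]=\inf\{t\ge0:X^\Delta_t[\ell]\le0\}$ and $\Gamma_\Delta[\ell]_t=\mathbb{P}(\tau^\Delta[\ell]\le t)$. Let $\ell^n,\ell\in M$ with $\ell^n_{\Delta\lfloor\cdot/\Delta\rfloor}\to\ell_{\Delta\lfloor\cdot/\Delta\rfloor}$ in $M$ and $\ell^n_0=\ell_0$ for all $n$. Assume in addition that either $\operatorname{law}(X_{0-})$ is atomless or $\operatorname{law}(Z_t)$ is atomless for every $t>0$. Then $\lim_{n\to\infty}\Gamma_\Delta[\ell^n]=\Gamma_\Delta[\ell]$ in $M$.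
   Context: $M$ is the set of càdlàg increasing functions $\ell:\overline{\mathbb{R}}\to[0,1]$ ($\overline{\mathbb{R}}$ the two-point compactification of $\mathbb{R}$) with $\ell_{0-}=0$ and $\ell_\infty=1$, with the topology: $\ell^n\to\ell$ iff $\ell^n_t\to\ell_t$ for all $t\in[0,\infty]$ at which $\ell$ is continuous. *)

From HB Require Import structures.
From mathcomp Require Import all_boot all_order all_algebra.
From mathcomp Require Import all_classical all_reals all_analysis.
Set Implicit Arguments. Unset Strict Implicit. Unset Printing Implicit Defensive.
Import Order.TTheory GRing.Theory Num.Theory.
Import numFieldNormedType.Exports.
Local Open Scope classical_set_scope.
Local Open Scope ring_scope.

Section Defs.
Context {R : realType}.

(* The space M: càdlàg increasing l : \bar R -> [0,1] with l_{0-} = 0 and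
   l_{+oo} = 1 (left limits exist automatically for monotone functions;
   right-continuity is required at every real point). *)
Definition inM (l : \bar R -> R) : Prop :=
  {homo l : x y / (x <= y)%E >-> x <= y} /\
  (forall t, 0 <= l t <= 1) /\
  ((fun x : R => l x%:E) @ 0^'- --> 0) /\
  l +oo%E = 1 /\
  (forall t : R, (fun x : R => l x%:E) @ t^'+ --> l t%:E).

Definition convM (u : nat -> \bar R -> R) (l : \bar R -> R) : Prop :=
  (forall n, inM (u n)) /\ inM l /\
  forall t : \bar R, (0 <= t)%E -> {for t, continuous l} ->
    u n t @[n --> \oo] --> l t.

Definition floorD (Delta : R) (t : \bar R) : \bar R :=
  match t with
  | EFin r => (Delta * (Num.floor (r / Delta))%:~R)%:E
  | e => e
  end.

Variables (d : measure_display) (T : measurableType d).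

Definition XD (X0 : T -> R) (Z : R -> T -> R) (alpha Delta : R)
  (l : \bar R -> R) (t : R) (w : T) : R :=
  let s := Delta * (Num.floor (t / Delta))%:~R in
  X0 w + Z s w - alpha * l s%:E.

Definition tauD (X0 : T -> R) (Z : R -> T -> R) (alpha Delta : R)
  (l : \bar R -> R) (w : T) : \bar R :=
  ereal_inf [set t%:E | t in [set t : R | 0 <= t /\ XD X0 Z alpha Delta l t w <= 0]].

Definition GammaD (P : probability T R) (X0 : T -> R) (Z : R -> T -> R)
  (alpha Delta : R) (l : \bar R -> R) : \bar R -> R :=
  fun t => fine (P [set w | (tauD X0 Z alpha Delta l w <= t)%E]).

(* Independence of X0 and the process Z: product rule on all finite-dimensional
   cylinder events of Z (these generate sigma(Z) and form a pi-system). *)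
Definition indep_rv_process (P : probability T R) (X0 : T -> R) (Z : R -> T -> R)
  : Prop :=
  forall (n : nat) (ts : 'I_n -> R) (A : set R) (B : 'I_n -> set R),
    measurable A -> (forall i, measurable (B i)) ->
    P (X0 @^-1` A `&` [set w | forall i, B i (Z (ts i) w)]) =
    (P (X0 @^-1` A) * P [set w | forall i, B i (Z (ts i) w)])%E.

End Defs.

From HB Require Import structures.
From mathcomp Require Import all_boot all_order all_algebra.
From mathcomp Require Import all_classical all_reals all_analysis.
From mathcomp Require Import lra.
Set Implicit Arguments.
Unset Strict Implicit.
Unset Printing Implicit Defensive.
Import Order.TTheory GRing.Theory Num.Theory.
Import numFieldNormedType.Exports.
Local Open Scope classical_set_scope.
Local Open Scope ring_scope.

(* The discretised process only moves at the grid times k Delta, so the event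
   {tau^Delta[l] <= t} is the finite union, over the grid times k Delta <= t, of
   the events {X0 + Z_{k Delta} <= alpha l_{k Delta}}.  Testing the convergence
   of the step functions at the midpoints of the grid cells, where they are
   continuous, gives l^n_{k Delta} -> l_{k Delta}.  For k >= 1 the variable
   X0 + Z_{k Delta} has no atom, being a sum of two independent variables one of
   which is atomless; hence the symmetric difference between the k-th events for
   l^n and for l has vanishing probability, and so has the one between the
   finite unions. *)

Lemma setY_setU_subset {T : Type} (A B C D : set T) :
  (A `|` B) `+` (C `|` D) `<=` (A `+` C) `|` (B `+` D).
Proof.
move=> x; rewrite /setY /=.
by have [|] := pselect (A x); have [|] := pselect (B x);
  have [|] := pselect (C x); have [|] := pselect (D x); tauto.
Qed.

Lemma measurableY {d : measure_display} {T : measurableType d} (A B : set T) :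
  measurable A -> measurable B -> measurable (A `+` B).
Proof. by move=> mA mB; apply: measurableU; exact: measurableD. Qed.

Lemma setY_sublevel_subset {T : Type} {R : realDomainType} (W : T -> R) (a b : R) :
  [set w | W w <= a] `+` [set w | W w <= b] `<=` [set w | `|W w - b| <= `|b - a|].
Proof.
move=> w [[/= Wa /negP]|[/= Wb /negP]]; rewrite -ltNge => Wlt;
  rewrite ler_norml; apply/andP; split;
  move: (ler_norm (b - a)) (ler_norm (a - b)); rewrite (distrC a); lra.
Qed.

Section finite_measure_setY.
Context {d : measure_display} {T : measurableType d} {R : realType}.
Variable mu : {finite_measure set T -> \bar R}.

Lemma fine_measure_ge0 (A : set T) : 0 <= fine (mu A).
Proof. by rewrite fine_ge0 ?measure_ge0. Qed.

Lemma fine_measure_le_setU (A B C : set T) :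
  measurable A -> measurable B -> measurable C ->
  A `<=` B `|` C -> fine (mu A) <= fine (mu B) + fine (mu C).
Proof.
move=> mA mB mC ABC; rewrite -lee_fin EFinD !fineK ?fin_num_measure //.
apply: le_trans (measureU2 mu mB mC).
by apply: le_measure; rewrite ?inE //; exact: measurableU.
Qed.

Lemma fine_measure_cvg_setY (A_ : nat -> set T) (A : set T) :
  (forall n, measurable (A_ n)) -> measurable A ->
  fine (mu (A_ n `+` A)) @[n --> \oo] --> 0 ->
  fine (mu (A_ n)) @[n --> \oo] --> fine (mu A).
Proof.
move=> mA_ mA /cvgrPdist_le AY0; apply/cvgrPdist_le => e e0.
have := AY0 e e0; apply: filterS => n.
rewrite sub0r normrN ger0_norm ?fine_measure_ge0 // => AYe.
have mAY := measurableY (mA_ n) mA.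
have le1 : fine (mu A) <= fine (mu (A_ n)) + fine (mu (A_ n `+` A)).
  apply: fine_measure_le_setU => // x Ax.
  by have [|] := pselect (A_ n x); [left|right; right].
have le2 : fine (mu (A_ n)) <= fine (mu A) + fine (mu (A_ n `+` A)).
  apply: fine_measure_le_setU => // x Anx.
  by have [|] := pselect (A x); [left|right; left].
by rewrite ler_norml; apply/andP; split; lra.
Qed.

Lemma fine_measure_setYU_cvg0 (A_ B_ : nat -> set T) (A B : set T) :
  (forall n, measurable (A_ n)) -> measurable A ->
  (forall n, measurable (B_ n)) -> measurable B ->
  fine (mu (A_ n `+` A)) @[n --> \oo] --> 0 ->
  fine (mu (B_ n `+` B)) @[n --> \oo] --> 0 ->
  fine (mu ((A_ n `|` B_ n) `+` (A `|` B))) @[n --> \oo] --> 0.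
Proof.
move=> mA_ mA mB_ mB AY0 BY0.
have AB0 : fine (mu (A_ n `+` A)) + fine (mu (B_ n `+` B)) @[n --> \oo] --> 0.
  by rewrite -(addr0 0); exact: cvgD.
apply: squeeze_cvgr (cvg_cst 0) AB0.
near=> n; rewrite fine_measure_ge0 /=.
apply: fine_measure_le_setU; [|exact: measurableY..|exact: setY_setU_subset].
by apply: measurableY; exact: measurableU.
Unshelve. all: end_near.
Qed.

Lemma fine_measure_setY_bigsetU_cvg0 (A_ : nat -> nat -> set T) (A : nat -> set T) N :
  (forall n k, measurable (A_ n k)) -> (forall k, measurable (A k)) ->
  (forall k, fine (mu (A_ n k `+` A k)) @[n --> \oo] --> 0) ->
  fine (mu (\big[setU/set0]_(k < N) A_ n k `+` \big[setU/set0]_(k < N) A k))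
    @[n --> \oo] --> 0.
Proof.
move=> mA_ mA AY0; elim: N => [|N IH].
  under eq_fun do rewrite !big_ord0 setYK measure0.
  exact: cvg_cst.
rewrite big_ord_recr; under eq_fun do rewrite big_ord_recr.
by apply: fine_measure_setYU_cvg0 => // *; exact: bigsetU_measurable.
Qed.

Lemma measurable_dist_le (W : T -> R) (c r : R) : measurable_fun setT W ->
  measurable [set w | `|W w - c| <= r].
Proof.
move=> mW; rewrite (_ : [set w | _] = W @^-1` `[c - r, c + r]).
  by rewrite -[X in measurable X]setTI; exact: mW.
by apply/seteqP; split => w; rewrite /= in_itv /= -ler_distl.
Qed.

Lemma fine_measure_ball_cvg (W : T -> R) (c : R) : measurable_fun setT W ->
  fine (mu [set w | `|W w - c| <= m.+1%:R^-1]) @[m --> \oo] -->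
  fine (mu (W @^-1` [set c])).
Proof.
move=> mW; pose B m := [set w | `|W w - c| <= m.+1%:R^-1].
have mB m : measurable (B m) by exact: measurable_dist_le.
have capB : \bigcap_m B m = W @^-1` [set c].
  apply/seteqP; split => [w Bw|w /= Wc m _]; last by rewrite /B /= Wc subrr normr0.
  apply/eqP; rewrite -subr_eq0 -normr_le0; apply/ler_addgt0Pr => e e0.
  have [m] := ltr_add_invr e0; rewrite !add0r => /ltW; exact: le_trans (Bw m I).
have mcapB : measurable (\bigcap_m B m) by exact: bigcap_measurable.
apply: (fine_cvg (f := mu \o B)); rewrite -capB fineK ?fin_num_measure //.
apply: nonincreasing_cvg_mu => //.
- by rewrite ltey_eq fin_num_measure.
- move=> m1 m2 m12; apply/subsetPset => w; rewrite /B /= => /le_trans; apply.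
  by rewrite lef_pV2 ?posrE // ler_nat.
Qed.

Lemma fine_measure_sublevel_setY_cvg0 (W : T -> R) (c : R) (c_ : nat -> R) :
  measurable_fun setT W -> mu (W @^-1` [set c]) = 0%E -> c_ n @[n --> \oo] --> c ->
  fine (mu ([set w | W w <= c_ n] `+` [set w | W w <= c])) @[n --> \oo] --> 0.
Proof.
move=> mW Wc0 c_c; apply/cvgrPdist_le => e e0.
have mle a : measurable [set w | W w <= a].
  by rewrite -[X in measurable X]setTI; exact: measurable_fun_le.
have /cvgrPdist_le/(_ e e0)[M _ /(_ M (leqnn M))] := fine_measure_ball_cvg (c := c) mW.
rewrite Wc0 /= sub0r normrN ger0_norm ?fine_measure_ge0 // => BMe.
have /cvgrPdist_le c_near := c_c.
near=> n; rewrite sub0r normrN ger0_norm ?fine_measure_ge0 //.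
apply: le_trans BMe; apply: fine_le; rewrite ?fin_num_measure //; first exact: measurableY.
  exact: measurable_dist_le.
apply: le_measure; rewrite ?inE; first exact: measurableY.
  exact: measurable_dist_le.
apply: subset_trans (@setY_sublevel_subset _ _ W _ _) _ => w /= /le_trans; apply.
by near: n; apply: c_near.
Unshelve. all: end_near.
Qed.

End finite_measure_setY.

Section independent_sum.
Context {d : measure_display} {T : measurableType d} {R : realType}.
Variable P : probability T R.

Lemma indep_add_atomless (U V : T -> R) :
  measurable_fun setT U -> measurable_fun setT V ->
  (forall A B, measurable A -> measurable B ->
    P (U @^-1` A `&` V @^-1` B) = (P (U @^-1` A) * P (V @^-1` B))%E) ->
  (forall x, P (V @^-1` [set x]) = 0%E) ->
  forall c, P ((U \+ V) @^-1` [set c]) = 0%E.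
Proof.
(* The joint law of (U, V) is the product law, so by Fubini
   P (U + V = c) is the integral of x |-> P (V = c - x) against the law of U. *)
move=> mU mV UV Vatom c.
pose fU : {mfun T >-> R} := mfun_Sub (mem_set mU : U \in mfun).
pose fV : {mfun T >-> R} := mfun_Sub (mem_set mV : V \in mfun).
have mUV : measurable_fun setT (fun w => (U w, V w)) by exact: measurable_fun_pair.
pose fUV : {mfun T >-> (R * R)%type} := mfun_Sub (mem_set mUV : _ \in mfun).
pose L := [set p : R * R | p.1 + p.2 = c].
have mL : measurable L.
  have mD := measurable_realfun.measurable_funD (@measurable_fst _ _ R R) measurable_snd.
  by rewrite -[L]setTI; exact: mD measurableT _ (measurable_set1 c).
have law_UV A B : measurable A -> measurable B ->
    distribution P fUV (A `*` B) = (distribution P fU A * distribution P fV B)%E.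
  by move=> mA mB; rewrite /distribution /pushforward /= -UV.
rewrite (_ : P _ = distribution P fUV L) //.
rewrite -(product_measure_unique law_UV mL) /product_measure1.
apply: integral0_eq => x _ /=; rewrite /distribution /pushforward /= -(Vatom (c - x)).
congr (P _); apply/seteqP; split => w /=; rewrite /xsection /L /= inE /=.
  by move=> <-; rewrite addrC addKr.
by move=> ->; rewrite addrC subrK.
Qed.

End independent_sum.

Section grid_step_function.
Context {R : realType}.
Variable Delta : R.
Hypothesis Delta_gt0 : 0 < Delta.

Lemma floorD_grid (k : nat) (x : R) :
  k%:R * Delta <= x < k.+1%:R * Delta -> floorD Delta x%:E = (k%:R * Delta)%:E.
Proof.
move=> /andP[kx xk]; congr EFin; rewrite (@floor_def _ _ k); first by rewrite -pmulrn mulrC.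
by rewrite -!pmulrn ler_pdivlMr // kx /= ltr_pdivrMr // addn1.
Qed.

Lemma convM_floorD_grid (ls : nat -> \bar R -> R) (l : \bar R -> R) :
  convM (fun n t => ls n (floorD Delta t)) (fun t => l (floorD Delta t)) ->
  forall k : nat, ls n (k%:R * Delta)%:E @[n --> \oo] --> l (k%:R * Delta)%:E.
Proof.
move=> [_ [_ conv]] k; pose m := k%:R * Delta + Delta / 2.
have m_in x : k%:R * Delta < x < k.+1%:R * Delta -> floorD Delta x%:E = (k%:R * Delta)%:E.
  by move=> /andP[kx xk]; apply: floorD_grid; rewrite (ltW kx).
have km : k%:R * Delta < m < k.+1%:R * Delta.
  by rewrite -natr1 mulrDl mul1r ltrDl ltrD2l ltr_pdivrMr // ltr_pMr // ltr1n divr_gt0.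
have step_cont : {for m%:E, continuous (fun t => l (floorD Delta t))}.
  have [k_m m_k] := andP km.
  have near_m : \forall x \near m, k%:R * Delta < x < k.+1%:R * Delta.
    apply: (@nbhs_interval _ _ _ (k%:R * Delta)%:E (k.+1%:R * Delta)%:E) => //.
    by move=> y; rewrite !lte_fin => -> ->.
  apply: cvg_near_cst; have := nbhs_image_EFin near_m.
  by apply: filterS => _ [x kxk <-]; rewrite !m_in.
have m_ge0 : (0 <= m%:E)%E.
  by rewrite lee_fin (le_trans _ (ltW (andP km).1)) // mulr_ge0 // ltW.
by have := conv _ m_ge0 step_cont; rewrite m_in.
Qed.

End grid_step_function.

Section discrete_hitting_time.
Context {R : realType} {d : measure_display} {T : measurableType d}.
Variables (P : probability T R) (X0 : T -> R) (Z : R -> T -> R) (alpha Delta : R).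
Hypothesis Delta_gt0 : 0 < Delta.

Lemma le_grid (k : int) (t : R) : (k%:~R * Delta <= t) = (k <= Num.floor (t / Delta)).
Proof. by rewrite floor_ge_int ler_pdivlMr. Qed.

Lemma XD_floor (l : \bar R -> R) (s : R) (n : nat) (w : T) :
  Num.floor (s / Delta) = n%:Z ->
  XD X0 Z alpha Delta l s w = XD X0 Z alpha Delta l (n%:R * Delta) w.
Proof. by move=> sn; rewrite /XD sn mulfK ?gt_eqF // pmulrn intrKfloor. Qed.

Definition hit (l : \bar R -> R) (k : nat) : set T :=
  [set w | XD X0 Z alpha Delta l (k%:R * Delta) w <= 0].

Lemma hitE (l : \bar R -> R) (k : nat) :
  hit l k = [set w | (X0 \+ Z (k%:R * Delta)) w <= alpha * l (k%:R * Delta)%:E].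
Proof.
by apply/seteqP; split => w;
  rewrite /hit /XD /= mulfK ?gt_eqF // pmulrn intrKfloor -pmulrn mulrC subr_le0.
Qed.

Definition grid_upto (t : R) : set nat := [set k | k%:R * Delta <= t].

Lemma grid_uptoE (t : R) : grid_upto t = [set k : nat | k%:Z <= Num.floor (t / Delta)].
Proof. by apply/seteqP; split => k; rewrite /grid_upto /= pmulrn le_grid. Qed.

Lemma grid_upto_lt0 (t : R) : t < 0 -> grid_upto t = set0.
Proof.
move=> t0; apply/seteqP; split => // k /=; apply/negP; rewrite -ltNge.
by rewrite (lt_le_trans t0) // mulr_ge0 // ltW.
Qed.

Lemma grid_upto_ge0 (t : R) : 0 <= t ->
  grid_upto t = `I_(`|Num.floor (t / Delta)|%N.+1).
Proof.
move=> t0; rewrite grid_uptoE; apply/seteqP; split => k /=;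
  by rewrite ltnS -lez_nat gez0_abs // floor_ge0 divr_ge0 // ltW.
Qed.

Lemma grid_upto_near_right (t : R) : \forall x \near t^'+, grid_upto x = grid_upto t.
Proof.
near=> x; rewrite !grid_uptoE (_ : Num.floor (x / Delta) = Num.floor (t / Delta)) //.
apply: floor_def; rewrite ler_pdivlMr // ltr_pdivrMr //; apply/andP; split.
  apply: le_trans (ltW _); last by near: x; exact: nbhs_right_gt.
  by rewrite le_grid.
by near: x; apply: nbhs_right_lt; rewrite -ltr_pdivrMr // floorD1_gt.
Unshelve. all: end_near.
Qed.

Lemma tauD_ge0 (l : \bar R -> R) (w : T) : (0 <= tauD X0 Z alpha Delta l w)%E.
Proof. by apply: le_ereal_inf_tmp => _ [s [s0 _] <-]; rewrite lee_fin. Qed.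

Lemma tauD_leE (l : \bar R -> R) (t : R) :
  [set w | (tauD X0 Z alpha Delta l w <= t%:E)%E] = \bigcup_(k in grid_upto t) hit l k.
Proof.
apply/seteqP; split => w /=; last first.
  move=> [k kt hk]; apply: le_trans (_ : (k%:R * Delta)%:E <= _)%E; last by rewrite lee_fin.
  apply: ereal_inf_lbound; exists (k%:R * Delta) => //.
  by split => //; rewrite mulr_ge0 // ltW.
(* XD is constant on the grid cells, so without a hit at a grid time <= t
   the process stays positive up to the next grid time, which exceeds t. *)
move=> tau_t; apply: contrapT => no_hit.
have : (((Num.floor (t / Delta) + 1)%:~R * Delta)%:E <= tauD X0 Z alpha Delta l w)%E.
  apply: le_ereal_inf_tmp => _ [s [s0 Xs] <-]; rewrite lee_fin.
  have : 0 <= Num.floor (s / Delta) by rewrite floor_ge0 divr_ge0 // ltW.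
  case sn : (Num.floor (s / Delta)) => [n|//] _.
  have tn : ~ (n%:Z <= Num.floor (t / Delta)).
    rewrite -le_grid -pmulrn => nt; apply: no_hit; exists n => //.
    by rewrite /hit /= -(XD_floor _ _ sn).
  apply: (@le_trans _ _ (n%:R * Delta)); last by rewrite pmulrn le_grid sn.
  by rewrite ler_pM2r // pmulrn ler_int lezD1 ltNge; apply/negP.
move/le_trans/(_ tau_t); rewrite lee_fin leNgt => /negP; apply.
by rewrite -ltr_pdivrMr // floorD1_gt.
Qed.

Section measurable_data.
Hypotheses (mX0 : measurable_fun setT X0) (mZ : forall t, measurable_fun setT (Z t)).

Lemma measurable_hit (l : \bar R -> R) (k : nat) : measurable (hit l k).
Proof.
rewrite hitE -[X in measurable X]setTI; apply: measurable_fun_le => //.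
exact: measurable_realfun.measurable_funD.
Qed.

Lemma measurable_tauD_le (l : \bar R -> R) (e : \bar R) :
  measurable [set w | (tauD X0 Z alpha Delta l w <= e)%E].
Proof.
case: e => [t| |].
- by rewrite tauD_leE; apply: bigcup_measurable => k _; exact: measurable_hit.
- by rewrite (_ : [set _ | _] = setT) //; apply/seteqP; split => w // _; exact: leey.
- rewrite (_ : [set _ | _] = set0) //; apply/seteqP; split => w //=.
  by move/(le_trans (tauD_ge0 l w)).
Qed.

Lemma GammaDE (l : \bar R -> R) (t : R) :
  GammaD P X0 Z alpha Delta l t%:E = fine (P (\bigcup_(k in grid_upto t) hit l k)).
Proof. by rewrite /GammaD tauD_leE. Qed.

Lemma GammaD_pinfty (l : \bar R -> R) : GammaD P X0 Z alpha Delta l +oo%E = 1.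
Proof.
rewrite /GammaD (_ : [set _ | _] = setT) ?probability_setT //.
by apply/seteqP; split => w // _; exact: leey.
Qed.

Lemma inM_GammaD (l : \bar R -> R) : inM (GammaD P X0 Z alpha Delta l).
Proof.
have fin e := fin_num_measure P _ (measurable_tauD_le l e).
split; [|split; [|split; [|split]]].
- move=> x y xy; apply: fine_le; rewrite ?fin //.
  apply: le_measure; rewrite ?inE; [exact: measurable_tauD_le..|].
  by move=> w /= /le_trans; apply.
- move=> e; rewrite fine_ge0 ?measure_ge0 //= -lee_fin fineK ?fin //.
  exact: probability_le1 (measurable_tauD_le l e).
- apply: cvg_near_cst; near=> x.
  by rewrite GammaDE grid_upto_lt0 ?bigcup_set0 ?measure0.
- exact: GammaD_pinfty.
- move=> t; apply: cvg_near_cst; near=> x; rewrite !GammaDE.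
  by congr (fine (P (\bigcup_(k in _) _))); near: x; exact: grid_upto_near_right.
Unshelve. all: end_near.
Qed.

Hypothesis indep : indep_rv_process P X0 Z.
Hypothesis atomless : (forall x : R, P (X0 @^-1` [set x]) = 0%E) \/
  (forall t : R, 0 < t -> forall x : R, P (Z t @^-1` [set x]) = 0%E).

Lemma X0_add_Z_atomless (s : R) : 0 < s -> forall c, P ((X0 \+ Z s) @^-1` [set c]) = 0%E.
Proof.
have indep_s A B : measurable A -> measurable B ->
    P (X0 @^-1` A `&` Z s @^-1` B) = (P (X0 @^-1` A) * P (Z s @^-1` B))%E.
  move=> mA mB; have := indep (fun _ : 'I_1 => s) mA (fun=> mB).
  rewrite (_ : [set w | forall i : 'I_1, B (Z s w)] = Z s @^-1` B) //.
  by apply/seteqP; split => w /=; [move/(_ ord0)|move=> ? ?].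
move=> s0 c; case: atomless => [X0_atomless|Z_atomless].
- rewrite (_ : _ @^-1` _ = (Z s \+ X0) @^-1` [set c]).
    by apply: indep_add_atomless => // A B mA mB; rewrite setIC muleC; exact: indep_s.
  by apply/seteqP; split => w /=; rewrite addrC.
- by apply: indep_add_atomless => //; exact: Z_atomless.
Qed.

Lemma hit_setY_cvg0 (ls : nat -> \bar R -> R) (l : \bar R -> R) (k : nat) :
  (forall c, P ((X0 \+ Z (k%:R * Delta)) @^-1` [set c]) = 0%E) ->
  ls n (k%:R * Delta)%:E @[n --> \oo] --> l (k%:R * Delta)%:E ->
  fine (P (hit (ls n) k `+` hit l k)) @[n --> \oo] --> 0.
Proof.
move=> atom ls_l; rewrite hitE; under eq_fun do rewrite hitE.
apply: (fine_measure_sublevel_setY_cvg0 (mu := P)).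
- exact: measurable_realfun.measurable_funD mX0 (mZ _).
- exact: atom.
- exact: cvgMl_tmp.
Qed.

Lemma GammaD_cvg (ls : nat -> \bar R -> R) (l : \bar R -> R) (t : R) : 0 <= t ->
  (forall n, ls n 0%:E = l 0%:E) ->
  (forall k : nat, ls n (k%:R * Delta)%:E @[n --> \oo] --> l (k%:R * Delta)%:E) ->
  GammaD P X0 Z alpha Delta (ls n) t%:E @[n --> \oo] --> GammaD P X0 Z alpha Delta l t%:E.
Proof.
move=> t0 ls0 ls_l; set N := `|Num.floor (t / Delta)|%N.+1.
have GammaE l' : GammaD P X0 Z alpha Delta l' t%:E =
    fine (P (\big[setU/set0]_(k < N) hit l' k)).
  by rewrite GammaDE grid_upto_ge0 // bigcup_mkord.
have hit_bigU (l' : \bar R -> R) : measurable (\big[setU/set0]_(k < N) hit l' k).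
  by apply: bigsetU_measurable => k _; exact: measurable_hit.
pose U n := \big[setU/set0]_(k < N) hit (ls n) k.
rewrite GammaE (_ : (fun n => _) = fun n => fine (P (U n))).
  2: by apply: funext => n; exact: GammaE.
apply: (fine_measure_cvg_setY (mu := P) (A_ := U)) => [n||]; rewrite /U //.
apply: (fine_measure_setY_bigsetU_cvg0 (mu := P) (A_ := fun n => hit (ls n)))
  => [n k|k|[|k]]; try exact: measurable_hit.
- (* At time 0 no atomlessness is available: the events agree since
     ls n 0 = l 0. *)
  have hit0 n : hit (ls n) 0 = hit l 0 by rewrite !hitE mul0r ls0.
  under eq_fun do rewrite hit0 setYK measure0.
  exact: cvg_cst.
- by apply: hit_setY_cvg0 => //; apply: X0_add_Z_atomless; rewrite mulr_gt0.
Qed.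

End measurable_data.
End discrete_hitting_time.

Theorem lemma2p4 (R : realType) (d : measure_display) (T : measurableType d)
  (P : probability T R) (X0 : T -> R) (Z : R -> T -> R) (alpha Delta : R)
  (lseq : nat -> \bar R -> R) (l : \bar R -> R) :
  0 < alpha ->
  measurable_fun setT X0 ->
  (forall t, measurable_fun setT (Z t)) ->
  (forall w, {within `[0, +oo[, continuous (fun t => Z t w)}) ->
  (forall w, Z 0 w = 0) ->
  indep_rv_process P X0 Z ->
  0 < Delta ->
  (forall n : nat, inM (lseq n)) -> inM l ->
  convM (fun (n : nat) (t : \bar R) => lseq n (floorD Delta t)) (fun t => l (floorD Delta t)) ->
  (forall n : nat, lseq n 0%:E = l 0%:E) ->
  ((forall x : R, P (X0 @^-1` [set x]) = 0%E) \/
   (forall t : R, 0 < t -> forall x : R, P (Z t @^-1` [set x]) = 0%E)) ->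
  convM (fun n : nat => GammaD P X0 Z alpha Delta (lseq n)) (GammaD P X0 Z alpha Delta l).
Proof.
move=> _ mX0 mZ _ _ indep Delta_gt0 _ _ grid_conv lseq0 atomless.
split; [by move=> n; exact: inM_GammaD|split; first exact: inM_GammaD].
case=> [t t0 _| _ _|//].
- by apply: GammaD_cvg => //; exact: convM_floorD_grid.
- rewrite GammaD_pinfty; under eq_fun do rewrite GammaD_pinfty.
  exact: cvg_cst.
Qed.
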